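(* Let $\mathcal{X}=\{1,\dots,n\}$ and $\pi$ a probability mass function on $\mathcal{X}$ with full support and $\pi(1)\le\dots\le\pi(n)$. Fix $k\in\{1,\dots,n\}$, let $\mathcal{O}_i=\{i\}$ for $1\le i\le k-1$ and $\mathcal{O}_k=\{k,\dots,n\}$, and let $G$ be the Gibbs kernel of this partition. For $P\in\mathcal{S}(\pi)$, $D^\pi_{KL}(GPG\|\Pi)=0$ if and only if: (1) $P(x,y)=\pi(y)$ for all $x,y\in\{1,\dots,k-1\}$; (2) $\sum_{w\in\mathcal{O}_k}P(x,w)=\pi(\mathcal{O}_k)$ for all $x\in\{1,\dots,k-1\}$; (3) $\sum_{z\in\mathcal{O}_k}\pi(z)P(z,y)=\pi(\mathcal{O}_k)\pi(y)$ for all $y\in\{1,\dots,k-1\}$; (4) $\sum_{z,w\in\mathcal{O}_k}\pi(z)P(z,w)=\pi(\mathcal{O}_k)^2$. Equivalently, these conditions characterise $GPG=\Pi$.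
   Context: $\mathcal{S}(\pi)$ is the set of transition matrices $P$ with $\pi P=\pi$. $G(x,y)=\pi(y)/\pi(\mathcal{O}(x))$ if $y$ is in the block $\mathcal{O}(x)$ containing $x$, else $0$, with $\pi(A)=\sum_{z\in A}\pi(z)$. $\Pi$ is the matrix with all rows equal to $\pi$, and $D^\pi_{KL}(P\|Q)=\sum_{x,y}\pi(x)P(x,y)\log\frac{P(x,y)}{Q(x,y)}$ with $0\log(0/a)=0$. *)

From HB Require Import structures.
From mathcomp Require Import all_boot all_order all_algebra.
From mathcomp Require Import reals exp.
Set Implicit Arguments. Unset Strict Implicit. Unset Printing Implicit Defensive.
Import Order.TTheory GRing.Theory Num.Theory.
Local Open Scope ring_scope.

Section Defs.
Variables (R : realType) (n : nat).

(* a probability mass function on 'I_n (states 1..n are 0..n-1) *)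
Definition is_pmf (pi : 'rV[R]_n) : Prop :=
  (forall x, 0 <= pi 0 x) /\ \sum_x pi 0 x = 1.

Definition full_support (pi : 'rV[R]_n) : Prop := forall x, 0 < pi 0 x.

Definition stochastic (P : 'M[R]_n) : Prop :=
  (forall x y, 0 <= P x y) /\ (forall x, \sum_y P x y = 1).

Definition in_S (pi : 'rV[R]_n) (P : 'M[R]_n) : Prop :=
  stochastic P /\ pi *m P = pi.

Definition massR (pi : 'rV[R]_n) (A : {set 'I_n}) : R := \sum_(z in A) pi 0 z.

(* Gibbs kernel of a partition, given by the block map x |-> O(x) *)
Definition gibbs_kernel (O : 'I_n -> {set 'I_n}) (pi : 'rV[R]_n) : 'M[R]_n :=
  \matrix_(x, y) (if y \in O x then pi 0 y / massR pi (O x) else 0).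

Definition PiM (pi : 'rV[R]_n) : 'M[R]_n := \matrix_(x, y) pi 0 y.

(* D^pi_KL(P || Q), with 0 log(0/a) = 0 *)
Definition KLpi (pi : 'rV[R]_n) (P Q : 'M[R]_n) : R :=
  \sum_x \sum_y (if P x y == 0 then 0
                 else pi 0 x * P x y * ln (P x y / Q x y)).

(* The partition O_i = {i} (i < k-1, 0-based), O_k = {k-1, ..., n-1} (0-based):
   block of x is the set of y with min(y, k-1) = min(x, k-1). *)
Definition blockk (k : nat) (x : 'I_n) : {set 'I_n} :=
  [set y : 'I_n | minn y k.-1 == minn x k.-1].

Definition lastblock (k : nat) : {set 'I_n} := [set z : 'I_n | k.-1 <= z]%N.

End Defs.

(** Put Q = G P G.  Averaging over blocks, Q(x, y) takes one of four forms
    according to whether x and y lie in a singleton block or in O_k, and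
    Q = Pi is then literally conditions (1)-(4); this holds for any matrix P.
    As Q is stochastic, D_KL(Q || Pi) is the pi-weighted sum of the relative
    entropies of the rows of Q with respect to pi, each nonnegative with
    equality only when the row is pi (Gibbs' inequality, from
    ln t <= t - 1 with equality only at t = 1). *)

From HB Require Import structures.
From mathcomp Require Import all_boot all_order all_algebra.
From mathcomp Require Import reals exp lra zify.
Import Order.TTheory GRing.Theory Num.Theory.
Local Open Scope ring_scope.
Set Implicit Arguments. Unset Strict Implicit. Unset Printing Implicit Defensive.

Lemma divf_eq (F : fieldType) (S m a : F) : m != 0 -> S / m = a <-> S = m * a.
Proof.
by move=> m0; split=> [<-|->]; [rewrite mulrC divfK | rewrite mulrC mulKf].
Qed.

Lemma mulf_eq_idr (F : fieldType) (a c : F) : c != 0 -> a * c = c <-> a = 1.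
Proof.
by move=> c0; split=> [|->]; rewrite ?mul1r // -{2}[c]mul1r => /(mulIf c0).
Qed.

Section RelativeEntropy.
Variable R : realType.

Lemma ln_le_subr1 (t : R) : 0 < t -> ln t <= t - 1 ?= iff (t == 1).
Proof.
move=> t0; have [->|t1] := eqVneq t 1; first by rewrite ln1 subrr; apply/leifP.
have lnt0 : ln t != 0 by rewrite ln_eq0.
have := expR_gt1Dx lnt0; rewrite lnK ?posrE // => lt.
by apply/leifP; lra.
Qed.

Definition relent_term (q p : R) : R := if q == 0 then 0 else q * ln (q / p).

Lemma relent_term_ge (q p : R) :
  0 <= q -> 0 < p -> q - p <= relent_term q p ?= iff (q == p).
Proof.
move=> q0 p0; rewrite /relent_term; have [->|qn0] := eqVneq q 0.
  rewrite sub0r eq_sym gt_eqF //.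
  by split; rewrite ?oppr_le0 ?oppr_eq0 ?ltW ?gt_eqF.
have q_gt0 : 0 < q by rewrite lt_def qn0.
have [le_ln eq_ln] := ln_le_subr1 (divr_gt0 p0 q_gt0).
have -> : q - p = - (q * (p / q - 1)).
  by rewrite mulrBr mulrCA divff // !mulr1 opprB.
have -> : ln (q / p) = - ln (p / q) by rewrite -lnV ?posrE ?divr_gt0 // invf_div.
rewrite mulrN; split; first by rewrite lerN2 ler_pM2l.
rewrite eqr_opp (inj_eq (mulfI qn0)) eq_sym eq_ln.
by apply/eqP/eqP => [/divr1_eq -> // | <-]; exact: divff.
Qed.

Lemma sum_relent_ge0 (I : finType) (q p : I -> R) :
  (forall i, 0 <= q i) -> (forall i, 0 < p i) -> \sum_i q i = \sum_i p i ->
  0 <= \sum_i relent_term (q i) (p i) ?= iff [forall i, q i == p i].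
Proof.
move=> q_ge0 p_gt0 sum_qp.
by have := leif_sum (fun i (_ : true) => relent_term_ge (q_ge0 i) (p_gt0 i));
  rewrite sumrB sum_qp subrr.
Qed.

Lemma KLpi_PiM n (pi : 'rV[R]_n) (Q : 'M[R]_n) :
  KLpi pi Q (PiM pi) = \sum_x pi 0 x * \sum_y relent_term (Q x y) (pi 0 y).
Proof.
apply: eq_bigr => x _; rewrite mulr_sumr; apply: eq_bigr => y _.
by rewrite mxE /relent_term; case: ifP => _; [rewrite mulr0 | rewrite mulrA].
Qed.

Lemma KLpi_PiM_eq0 n (pi : 'rV[R]_n) (Q : 'M[R]_n) :
  full_support pi -> \sum_x pi 0 x = 1 -> stochastic Q ->
  KLpi pi Q (PiM pi) = 0 <-> Q = PiM pi.
Proof.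
move=> pi_gt0 pi1 [Q_ge0 Q1].
have row x := sum_relent_ge0 (Q_ge0 x) pi_gt0 (etrans (Q1 x) (esym pi1)).
have KL0 : (0 == KLpi pi Q (PiM pi)) = [forall x, [forall y, Q x y == pi 0 y]].
  have term x : 0 <= pi 0 x * \sum_y relent_term (Q x y) (pi 0 y)
                   ?= iff [forall y, Q x y == pi 0 y].
    rewrite /Order.leif mulr_ge0 ?(row x).1 ?ltW //.
    by rewrite eq_sym mulf_eq0 gt_eqF //= eq_sym (row x).2.
  by rewrite KLpi_PiM (leif_0_sum (fun x _ => term x)).2.
rewrite -matrixP; split=> [/esym/eqP | Q_Pi].
  by rewrite KL0 => /forallP Q_Pi x y; rewrite mxE; apply/eqP/(forallP (Q_Pi x)).
apply/esym/eqP; rewrite KL0.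
by apply/forallP => x; apply/forallP => y; rewrite Q_Pi mxE.
Qed.

End RelativeEntropy.

Lemma stochastic_mulmx (R : realType) n (A B : 'M[R]_n) :
  stochastic A -> stochastic B -> stochastic (A *m B).
Proof.
move=> [A_ge0 A1] [B_ge0 B1]; split=> [x y|x].
  by rewrite mxE; apply: sumr_ge0 => a _; apply: mulr_ge0.
under eq_bigr do rewrite mxE.
rewrite exchange_big /= -(A1 x); apply: eq_bigr => a _.
by rewrite -mulr_sumr B1 mulr1.
Qed.

Section GibbsKernel.
Variables (R : realType) (n : nat) (O : 'I_n -> {set 'I_n}) (pi : 'rV[R]_n).
Local Notation G := (gibbs_kernel O pi).

Lemma massR_gt0 (A : {set 'I_n}) x :
  full_support pi -> x \in A -> 0 < massR pi A.
Proof.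
move=> pi_gt0 xA; rewrite /massR (bigD1 x) //=.
by rewrite ltr_pwDl // sumr_ge0 // => z _; apply: ltW.
Qed.

Lemma gibbs_kernel_mulmx (M : 'M[R]_n) (x b : 'I_n) :
  (G *m M) x b = (\sum_(a in O x) pi 0 a * M a b) / massR pi (O x).
Proof.
rewrite mxE mulr_suml [RHS]big_mkcond; apply: eq_bigr => a _ /=.
by rewrite mxE; case: ifP => _; [rewrite mulrAC | rewrite !mul0r].
Qed.

Hypothesis O_refl : forall x, x \in O x.
Hypothesis O_block : forall x y, y \in O x -> O y = O x.

Lemma mem_block_sym x y : (y \in O x) = (x \in O y).
Proof. by apply/idP/idP => h; rewrite (O_block h). Qed.

Lemma mulmx_gibbs_kernel (M : 'M[R]_n) (x y : 'I_n) :
  (M *m G) x y = (\sum_(b in O y) M x b) / massR pi (O y) * pi 0 y.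
Proof.
rewrite mxE -mulrA mulr_suml [RHS]big_mkcond; apply: eq_bigr => b _ /=.
rewrite mxE -mem_block_sym; case: ifPn => [yb|_]; last by rewrite mulr0.
by rewrite (O_block yb) [pi 0 y / _]mulrC.
Qed.

Lemma gibbs_kernel_stochastic : full_support pi -> stochastic G.
Proof.
move=> pi_gt0.
have mass_gt0 x : 0 < massR pi (O x) by apply: massR_gt0 (O_refl x).
split=> [x y|x]; first by rewrite mxE; case: ifP => // _; rewrite divr_ge0 ?ltW.
under eq_bigr do rewrite mxE.
by rewrite -big_mkcond -mulr_suml -/(massR pi _) divff ?gt_eqF.
Qed.

End GibbsKernel.

Section Blockk.
Variables n k : nat.

Lemma blockk_refl (x : 'I_n) : x \in blockk k x.
Proof. by rewrite inE. Qed.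

Lemma blockk_block (x y : 'I_n) : y \in blockk k x -> blockk k y = blockk k x.
Proof. by rewrite inE => /eqP e; apply/setP => z; rewrite !inE e. Qed.

Lemma blockk_small (x : 'I_n) : (x < k.-1)%N -> blockk k x = [set x].
Proof.
move=> hx; apply/setP => y; rewrite !inE; apply/eqP/eqP => [e|->] //.
by apply/val_inj => /=; move: e; case: (leqP k.-1 y) => hy; lia.
Qed.

Lemma blockk_big (x : 'I_n) : (k.-1 <= x)%N -> blockk k x = lastblock n k.
Proof. by move=> hx; apply/setP => y; rewrite !inE; apply/eqP/idP; lia. Qed.

End Blockk.

Section BlockkSandwich.
Variables (R : realType) (n k : nat) (pi : 'rV[R]_n) (P : 'M[R]_n).
Hypothesis pi_gt0 : full_support pi.
Local Notation G := (gibbs_kernel (blockk k) pi).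
Local Notation Ok := (lastblock n k).

Lemma massR_lastblock_neq0 (y : 'I_n) : (k.-1 <= y)%N -> massR pi Ok != 0.
Proof. by move=> hy; rewrite gt_eqF // (massR_gt0 (x := y)) // inE. Qed.

Lemma gibbs_blockk_mulmx_small (M : 'M[R]_n) (x b : 'I_n) :
  (x < k.-1)%N -> (G *m M) x b = M x b.
Proof.
move=> hx; rewrite gibbs_kernel_mulmx blockk_small // /massR !big_set1.
by rewrite mulrAC divff ?mul1r ?gt_eqF.
Qed.

Lemma gibbs_blockk_mulmx_big (M : 'M[R]_n) (x b : 'I_n) : (k.-1 <= x)%N ->
  (G *m M) x b = (\sum_(a in Ok) pi 0 a * M a b) / massR pi Ok.
Proof. by move=> hx; rewrite gibbs_kernel_mulmx blockk_big. Qed.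

Lemma mulmx_gibbs_blockk_small (M : 'M[R]_n) (x y : 'I_n) :
  (y < k.-1)%N -> (M *m G) x y = M x y.
Proof.
move=> hy; rewrite (mulmx_gibbs_kernel pi (blockk_refl k) (@blockk_block n k)).
by rewrite blockk_small // /massR !big_set1 divfK ?gt_eqF.
Qed.

Lemma mulmx_gibbs_blockk_big (M : 'M[R]_n) (x y : 'I_n) : (k.-1 <= y)%N ->
  (M *m G) x y = (\sum_(b in Ok) M x b) / massR pi Ok * pi 0 y.
Proof.
move=> hy; rewrite (mulmx_gibbs_kernel pi (blockk_refl k) (@blockk_block n k)).
by rewrite blockk_big.
Qed.

Local Notation Q := (G *m P *m G).

Lemma sandwich_small_small (x y : 'I_n) :
  (x < k.-1)%N -> (y < k.-1)%N -> Q x y = P x y.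
Proof.
by move=> hx hy; rewrite mulmx_gibbs_blockk_small // gibbs_blockk_mulmx_small.
Qed.

Lemma sandwich_small_big_eq (x y : 'I_n) : (x < k.-1)%N -> (k.-1 <= y)%N ->
  Q x y = pi 0 y <-> \sum_(w in Ok) P x w = massR pi Ok.
Proof.
move=> hx hy; rewrite mulmx_gibbs_blockk_big // mulf_eq_idr ?gt_eqF //.
under eq_bigr do rewrite gibbs_blockk_mulmx_small //.
by rewrite divf_eq ?mulr1 // (massR_lastblock_neq0 hy).
Qed.

Lemma sandwich_big_small_eq (x y : 'I_n) : (k.-1 <= x)%N -> (y < k.-1)%N ->
  Q x y = pi 0 y <-> \sum_(z in Ok) pi 0 z * P z y = massR pi Ok * pi 0 y.
Proof.
move=> hx hy; rewrite mulmx_gibbs_blockk_small // gibbs_blockk_mulmx_big //.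
by rewrite divf_eq // (massR_lastblock_neq0 hx).
Qed.

Lemma sandwich_big_big_eq (x y : 'I_n) : (k.-1 <= x)%N -> (k.-1 <= y)%N ->
  Q x y = pi 0 y <->
  \sum_(z in Ok) \sum_(w in Ok) pi 0 z * P z w = massR pi Ok ^+ 2.
Proof.
move=> hx hy; have m0 := massR_lastblock_neq0 hy.
rewrite mulmx_gibbs_blockk_big // mulf_eq_idr ?gt_eqF //.
under eq_bigr do rewrite gibbs_blockk_mulmx_big //.
by rewrite -mulr_suml exchange_big divf_eq // divf_eq // mulr1 expr2.
Qed.

Hypothesis hk : (k.-1 < n)%N.

Lemma sandwich_eq_PiM : Q = PiM pi <->
  [/\ (forall x y : 'I_n, (x < k.-1)%N -> (y < k.-1)%N -> P x y = pi 0 y),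
      (forall x : 'I_n, (x < k.-1)%N -> \sum_(w in Ok) P x w = massR pi Ok),
      (forall y : 'I_n, (y < k.-1)%N ->
         \sum_(z in Ok) pi 0 z * P z y = massR pi Ok * pi 0 y)
    & \sum_(z in Ok) \sum_(w in Ok) pi 0 z * P z w = massR pi Ok ^+ 2].
Proof.
pose z0 : 'I_n := Ordinal hk.
rewrite -matrixP; split=> [Q_Pi | [c1 c2 c3 c4] x y]; last first.
  rewrite [PiM _ _ _]mxE; case: (ltnP x k.-1) => hx; case: (ltnP y k.-1) => hy.
  - by rewrite sandwich_small_small // c1.
  - by apply/(sandwich_small_big_eq hx hy)/c2.
  - by apply/(sandwich_big_small_eq hx hy)/c3.
  - exact/(sandwich_big_big_eq hx hy).
have {}Q_Pi x y : Q x y = pi 0 y by rewrite Q_Pi mxE.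
split=> [x y hx hy | x hx | y hy |].
- by rewrite -sandwich_small_small.
- exact/(sandwich_small_big_eq (y := z0)).
- exact/(sandwich_big_small_eq (x := z0)).
- exact/(sandwich_big_big_eq (x := z0) (y := z0)).
Qed.

End BlockkSandwich.

Theorem proposition7p2 (R : realType) (n : nat) (pi : 'rV[R]_n) (k : nat)
    (hpi : is_pmf pi) (hfull : full_support pi)
    (hmono : forall x y : 'I_n, (x <= y)%N -> pi 0 x <= pi 0 y)
    (hk1 : (1 <= k)%N) (hkn : (k <= n)%N)
    (P : 'M[R]_n) (hP : in_S pi P) :
  let G := gibbs_kernel (blockk k) pi in
  let Ok := lastblock n k in
  let conds :=
    [/\ (forall x y : 'I_n, (x < k.-1)%N -> (y < k.-1)%N -> P x y = pi 0 y),
        (forall x : 'I_n, (x < k.-1)%N -> \sum_(w in Ok) P x w = massR pi Ok),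
        (forall y : 'I_n, (y < k.-1)%N ->
           \sum_(z in Ok) pi 0 z * P z y = massR pi Ok * pi 0 y)
      & \sum_(z in Ok) \sum_(w in Ok) pi 0 z * P z w = massR pi Ok ^+ 2] in
  (KLpi pi (G *m P *m G) (PiM pi) = 0 <-> conds) /\
  (G *m P *m G = PiM pi <-> conds).
Proof.
move=> G Ok conds.
have GPG_Pi : G *m P *m G = PiM pi <-> conds.
  by apply: sandwich_eq_PiM; rewrite ?prednK.
split=> //; rewrite -GPG_Pi; apply: KLpi_PiM_eq0 => //; first by case: hpi.
have G_stoch : stochastic G.
  exact: gibbs_kernel_stochastic (blockk_refl k) hfull.
by apply: stochastic_mulmx => //; apply: stochastic_mulmx => //; case: hP.
Qed.
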